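(* Let $\mathcal H=L^2(S^1,\mathbb C^{N+1})$ and let $\mathcal H_+\subset\mathcal H$ be the subspace of boundary values of holomorphic maps $\{|z|<1\}\to\mathbb C^{N+1}$ (the vector-valued Hardy space). Let $\mathbb P\subset\mathcal H$ be a closed subspace such that $z^{-1}\mathbb P\subset\mathbb P$ and $\mathbb P\oplus\mathcal H_+=\mathcal H$ (direct sum, not necessarily orthogonal). Then $\bigcup_{n\ge0}z^n\mathbb P$ is dense in $\mathcal H$.
   Context: Here $z$ denotes the coordinate function on $S^1=\{|z|=1\}$, acting on $\mathcal H$ by multiplication. *)

(* H = L^2(S^1, C^(N+1)) is modelled, via the Fourier
   transform (Plancherel), as l^2(Z, C^(N+1)): an element is its sequence of
   Fourier coefficients f k j (k : Z frequency, j < N+1 component). *)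
From Stdlib Require Import Reals ZArith.
Open Scope R_scope.

Definition C := (R * R)%type.
Definition C0 : C := (0, 0).
Definition Cadd (a b : C) : C := (fst a + fst b, snd a + snd b).
Definition Copp (a : C) : C := (- fst a, - snd a).
Definition Cmul (a b : C) : C :=
  (fst a * fst b - snd a * snd b, fst a * snd b + snd a * fst b).
Definition Cnorm2 (a : C) : R := fst a * fst a + snd a * snd a.

Definition seqC := Z -> nat -> C.

Definition energy (N : nat) (f : seqC) (M : nat) : R :=
  sum_f_R0 (fun i => sum_f_R0 (fun j => Cnorm2 (f (Z.of_nat i - Z.of_nat M)%Z j)) N)
           (2 * M).

Definition in_H (N : nat) (f : seqC) : Prop :=
  (forall k j, (N < j)%nat -> f k j = C0) /\
  exists B : R, forall M, energy N f M <= B.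

Definition sub (f g : seqC) : seqC := fun k j => Cadd (f k j) (Copp (g k j)).

Definition dist_le (N : nat) (f g : seqC) (eps : R) : Prop :=
  forall M, energy N (sub f g) M <= eps * eps.

(* H_+ : boundary values of holomorphic maps = nonnegative frequencies *)
Definition Hplus (N : nat) (f : seqC) : Prop :=
  in_H N f /\ forall k j, (k < 0)%Z -> f k j = C0.

Definition is_subspace (N : nat) (P : seqC -> Prop) : Prop :=
  (forall f, P f -> in_H N f) /\
  P (fun _ _ => C0) /\
  (forall f g, P f -> P g -> P (fun k j => Cadd (f k j) (g k j))) /\
  (forall (c : C) f, P f -> P (fun k j => Cmul c (f k j))).

Definition is_closed (N : nat) (P : seqC -> Prop) : Prop :=
  forall f, in_H N f ->
    (forall eps, 0 < eps -> exists g, P g /\ dist_le N f g eps) -> P f.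

(* multiplication by z^n (n : Z) shifts Fourier coefficients by n *)
Definition zpow_mul (n : Z) (f : seqC) : seqC := fun k j => f (k - n)%Z j.

Definition direct_sum_H (N : nat) (P : seqC -> Prop) : Prop :=
  (forall f, P f -> Hplus N f -> forall k j, f k j = C0) /\
  (forall f, in_H N f -> exists p h, P p /\ Hplus N h /\
        forall k j, f k j = Cadd (p k j) (h k j)).

Definition dense_in_H (N : nat) (S : seqC -> Prop) : Prop :=
  forall f, in_H N f -> forall eps, 0 < eps -> exists g, S g /\ dist_le N f g eps.

(* Let [proj_plus] be the projection of H onto H_+ along P.  Since P and H_+ are closed, its
   graph is closed, and the Baire category theorem in the complete space H makes it bounded:
   ||proj_plus x||^2 <= K0 whenever ||x||^2 <= a.

   Now fix e with ||e||^2 <= a.  For every m, e = z^m p_m + b_m with p_m in P (decompose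
   z^-m e), where b_m lives on frequencies >= m and ||b_m||^2 <= K0.  Choosing m_1 < m_2 < ...
   so far apart that the b_(m_i) are almost orthogonal, K e lies within about sqrt (K K0) of
   z^n P for some n (as z^-1 P is contained in P, the union of the z^n P is a subspace).
   Dividing by K, e is in the closure of the union.  By scaling and shifting this holds for
   every vector z^k e_j of the Fourier basis, hence for all finite Fourier sums, which are
   dense in H. *)

From Pilot Require Import Defs.
From Stdlib Require Import Reals ZArith Lra Lia List.
From Stdlib Require Import ClassicalEpsilon FunctionalExtensionality Classical.
Open Scope R_scope.

Definition vadd (f g : seqC) : seqC := fun k j => Cadd (f k j) (g k j).
Definition vscale (c : Defs.C) (f : seqC) : seqC := fun k j => Cmul c (f k j).
Definition vzero : seqC := fun _ _ => C0.

Definition norm2_le (N : nat) (f : seqC) (B : R) : Prop := forall M, energy N f M <= B.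

Ltac ceq := unfold sub, vadd, vscale, vzero, zpow_mul, Cadd, Copp, Cmul, C0;
  apply injective_projections; simpl; ring.

Lemma seqC_ext (f g : seqC) : (forall k j, f k j = g k j) -> f = g.
Proof. intros H. do 2 (apply functional_extensionality; intro). apply H. Qed.

Lemma Cnorm2_ge0 a : 0 <= Cnorm2 a.
Proof. destruct a; unfold Cnorm2; simpl; nra. Qed.

Lemma Cnorm2_Cmul c a : Cnorm2 (Cmul c a) = Cnorm2 c * Cnorm2 a.
Proof. destruct c, a; unfold Cnorm2, Cmul; simpl; ring. Qed.

Lemma Cnorm2_Cadd_le a b : Cnorm2 (Cadd a b) <= 2 * Cnorm2 a + 2 * Cnorm2 b.
Proof.
  destruct a as [a1 a2], b as [b1 b2]; unfold Cnorm2, Cadd; simpl.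
  pose proof (Rle_0_sqr (a1 - b1)); pose proof (Rle_0_sqr (a2 - b2)); unfold Rsqr in *; nra.
Qed.

Lemma Cnorm2_sub_le a b : Cnorm2 (Cadd a (Copp b)) <= 2 * Cnorm2 a + 2 * Cnorm2 b.
Proof.
  destruct a as [a1 a2], b as [b1 b2]; unfold Cnorm2, Cadd, Copp; simpl.
  pose proof (Rle_0_sqr (a1 + b1)); pose proof (Rle_0_sqr (a2 + b2)); unfold Rsqr in *; nra.
Qed.

Lemma Cnorm2_Cadd_disjoint a b : a = C0 \/ b = C0 -> Cnorm2 (Cadd a b) <= Cnorm2 a + Cnorm2 b.
Proof. intros [-> | ->]; destruct a || destruct b; unfold Cnorm2, Cadd, C0; simpl; nra. Qed.

Lemma Cnorm2_small_eq0 a : (forall e, 0 < e -> Cnorm2 a <= e) -> a = C0.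
Proof.
  destruct a as [x y]; unfold Cnorm2; simpl; intros H.
  assert (x * x + y * y <= 0).
  { apply Rnot_lt_le; intros Hc; specialize (H ((x * x + y * y) / 2)); lra. }
  apply injective_projections; simpl; nra.
Qed.

Definition coef_energy (N : nat) (f : seqC) (k : Z) : R :=
  sum_f_R0 (fun j => Cnorm2 (f k j)) N.

Definition shell (N : nat) (f : seqC) (m : nat) : R :=
  match m with
  | O => coef_energy N f 0
  | S _ => coef_energy N f (- Z.of_nat m) + coef_energy N f (Z.of_nat m)
  end.

Lemma coef_energy_ge0 N f k : 0 <= coef_energy N f k.
Proof. apply cond_pos_sum; intros; apply Cnorm2_ge0. Qed.

Lemma shell_ge0 N f m : 0 <= shell N f m.
Proof.
  destruct m; unfold shell; [apply coef_energy_ge0|].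
  pose proof (coef_energy_ge0 N f (- Z.of_nat (S m))); pose proof (coef_energy_ge0 N f (Z.of_nat (S m))).
  lra.
Qed.

Lemma energy_window N f M :
  energy N f M = sum_f_R0 (fun i => coef_energy N f (Z.of_nat i - Z.of_nat M)) (2 * M).
Proof. reflexivity. Qed.

Lemma energy_S N f M :
  energy N f (S M) = energy N f M + coef_energy N f (- Z.of_nat (S M)) + coef_energy N f (Z.of_nat (S M)).
Proof.
  rewrite !energy_window.
  replace (2 * S M)%nat with (S (S (2 * M))) by lia.
  rewrite tech5, decomp_sum by lia; simpl Init.Nat.pred.
  replace (Z.of_nat (S (S (2 * M))) - Z.of_nat (S M))%Z with (Z.of_nat (S M)) by lia.
  replace (Z.of_nat 0 - Z.of_nat (S M))%Z with (- Z.of_nat (S M))%Z by lia.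
  replace (Init.Nat.pred (S (2 * M))) with (2 * M)%nat by reflexivity.
  rewrite (sum_eq _ (fun i => coef_energy N f (Z.of_nat i - Z.of_nat M)%Z) (2 * M)).
  - lra.
  - intros i _; f_equal; lia.
Qed.

Lemma energy_shells N f M : energy N f M = sum_f_R0 (shell N f) M.
Proof.
  induction M as [|M IH]; [reflexivity|].
  rewrite energy_S, IH, tech5; cbn [shell]; lra.
Qed.

Lemma energy_ge0 N f M : 0 <= energy N f M.
Proof. rewrite energy_shells; apply cond_pos_sum; intros; apply shell_ge0. Qed.

Lemma sum_f_R0_ge_term (u : nat -> R) n i :
  (forall i, 0 <= u i) -> (i <= n)%nat -> u i <= sum_f_R0 u n.
Proof.
  intros Hu Hi; induction n as [|n IH].
  - replace i with 0%nat by lia; simpl; lra.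
  - rewrite tech5; destruct (Nat.eq_dec i (S n)) as [->|Hne].
    + pose proof (cond_pos_sum u n Hu); lra.
    + specialize (IH ltac:(lia)); specialize (Hu (S n)); lra.
Qed.

Lemma Cnorm2_le_energy N f k j : (j <= N)%nat -> Cnorm2 (f k j) <= energy N f (Z.abs_nat k).
Proof.
  intros Hj; rewrite energy_shells.
  eapply Rle_trans;
    [|apply (sum_f_R0_ge_term _ _ (Z.abs_nat k)); [intros; apply shell_ge0|lia]].
  assert (Hc : Cnorm2 (f k j) <= coef_energy N f k).
  { apply (sum_f_R0_ge_term (fun j => Cnorm2 (f k j))); auto; intros; apply Cnorm2_ge0. }
  destruct (Z.abs_nat k) as [|m] eqn:Hk.
  - replace k with 0%Z in * by lia; exact Hc.
  - pose proof (coef_energy_ge0 N f (- Z.of_nat (S m))); pose proof (coef_energy_ge0 N f (Z.of_nat (S m))).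
    cbn [shell]; destruct (Z_le_gt_dec 0 k).
    + replace k with (Z.of_nat (S m)) in * by lia; lra.
    + replace k with (- Z.of_nat (S m))%Z in * by lia; lra.
Qed.

Lemma energy_zpow_one N f M : energy N (zpow_mul 1 f) M <= energy N f (S M).
Proof.
  rewrite !energy_window.
  replace (2 * S M)%nat with (2 * M + 2)%nat by lia.
  assert (Hmono : forall d, sum_f_R0 (fun i => coef_energy N f (Z.of_nat i - Z.of_nat (S M))) (2 * M)
                        <= sum_f_R0 (fun i => coef_energy N f (Z.of_nat i - Z.of_nat (S M))) (2 * M + d)).
  { induction d; [rewrite Nat.add_0_r; lra|].
    replace (2 * M + S d)%nat with (S (2 * M + d)) by lia; rewrite tech5.
    pose proof (coef_energy_ge0 N f (Z.of_nat (S (2 * M + d)) - Z.of_nat (S M))); lra. }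
  eapply Rle_trans; [|apply Hmono].
  right; apply sum_eq; intros i _; unfold coef_energy, zpow_mul; apply sum_eq; intros j _; do 2 f_equal; lia.
Qed.

Lemma energy_zpow_minus_one N f M : energy N (zpow_mul (-1) f) M <= energy N f (S M).
Proof.
  rewrite !energy_window.
  replace (2 * S M)%nat with (S (S (2 * M))) by lia.
  rewrite (decomp_sum _ (S (S (2 * M)))) by lia; simpl Init.Nat.pred.
  rewrite (decomp_sum _ (S (2 * M))) by lia; simpl Init.Nat.pred.
  pose proof (coef_energy_ge0 N f (Z.of_nat 0 - Z.of_nat (S M))).
  pose proof (coef_energy_ge0 N f (Z.of_nat 1 - Z.of_nat (S M))).
  match goal with |- ?a <= _ + (_ + ?b) => assert (a = b) end.
  { apply sum_eq; intros i _; unfold coef_energy, zpow_mul; apply sum_eq; intros j _; do 2 f_equal; lia. }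
  lra.
Qed.

Lemma norm2_le_dominated N f g h a b B1 B2 :
  (forall k j, (j <= N)%nat -> Cnorm2 (f k j) <= a * Cnorm2 (g k j) + b * Cnorm2 (h k j)) ->
  0 <= a -> 0 <= b -> norm2_le N g B1 -> norm2_le N h B2 -> norm2_le N f (a * B1 + b * B2).
Proof.
  intros Hdom Ha Hb Hg Hh M.
  assert (energy N f M <= a * energy N g M + b * energy N h M).
  { rewrite !energy_shells, !scal_sum, <- plus_sum; apply sum_Rle; intros m _.
    assert (Hc : forall k, coef_energy N f k <= a * coef_energy N g k + b * coef_energy N h k).
    { intros k; unfold coef_energy; rewrite !scal_sum, <- plus_sum.
      apply sum_Rle; intros j Hj; specialize (Hdom k j Hj); lra. }
    destruct m; cbn [shell]; [specialize (Hc 0%Z); lra|].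
    pose proof (Hc (- Z.of_nat (S m))%Z); pose proof (Hc (Z.of_nat (S m))); lra. }
  specialize (Hg M); specialize (Hh M); nra.
Qed.

Lemma norm2_le_mono N f B B' : norm2_le N f B -> B <= B' -> norm2_le N f B'.
Proof. intros H HB M; specialize (H M); lra. Qed.

Lemma norm2_le_ge0 N f B : norm2_le N f B -> 0 <= B.
Proof. intros H; specialize (H 0%nat); pose proof (energy_ge0 N f 0); lra. Qed.

Lemma norm2_le_ext N f g B : (forall k j, f k j = g k j) -> norm2_le N f B -> norm2_le N g B.
Proof. intros H; rewrite (seqC_ext f g H); auto. Qed.

Lemma norm2_le_zero N B : 0 <= B -> norm2_le N vzero B.
Proof.
  intros HB M; eapply Rle_trans; [|exact HB]; right.
  rewrite energy_window, (sum_eq _ (fun _ => 0)), sum_cte; [ring|].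
  intros i _; unfold coef_energy, vzero; rewrite (sum_eq _ (fun _ => 0)), sum_cte; [ring|].
  intros; unfold Cnorm2, C0; simpl; ring.
Qed.

Lemma norm2_le_sub_diag N f : norm2_le N (sub f f) 0.
Proof.
  apply norm2_le_ext with vzero; [intros; ceq|]; apply norm2_le_zero; lra.
Qed.

Lemma norm2_le_scale N c f B : norm2_le N f B -> norm2_le N (vscale c f) (Cnorm2 c * B).
Proof.
  intros H; replace (Cnorm2 c * B) with (Cnorm2 c * B + 0 * B) by ring.
  apply norm2_le_dominated with f f; auto; [|apply Cnorm2_ge0|lra].
  intros k j _; unfold vscale; rewrite Cnorm2_Cmul; lra.
Qed.

Lemma norm2_le_add N f g B1 B2 :
  norm2_le N f B1 -> norm2_le N g B2 -> norm2_le N (vadd f g) (2 * B1 + 2 * B2).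
Proof.
  intros; apply norm2_le_dominated with f g; auto; try lra.
  intros k j _; apply Cnorm2_Cadd_le.
Qed.

Lemma norm2_le_sub N f g B1 B2 :
  norm2_le N f B1 -> norm2_le N g B2 -> norm2_le N (sub f g) (2 * B1 + 2 * B2).
Proof.
  intros; apply norm2_le_dominated with f g; auto; try lra.
  intros k j _; apply Cnorm2_sub_le.
Qed.

Lemma norm2_le_sub_comm N f g B : norm2_le N (sub f g) B -> norm2_le N (sub g f) B.
Proof.
  intros H; replace B with (1 * B + 0 * B) by ring.
  apply norm2_le_dominated with (sub f g) (sub f g); auto; try lra.
  intros k j _; unfold sub, Cnorm2, Cadd, Copp; simpl; lra.
Qed.

Lemma norm2_le_sub_trans N f g h B1 B2 :
  norm2_le N (sub f g) B1 -> norm2_le N (sub g h) B2 -> norm2_le N (sub f h) (2 * B1 + 2 * B2).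
Proof.
  intros H1 H2; apply norm2_le_ext with (vadd (sub f g) (sub g h)).
  - intros; ceq.
  - apply norm2_le_add; auto.
Qed.

Lemma norm2_le_of_sub N f g B1 B2 :
  norm2_le N (sub f g) B1 -> norm2_le N g B2 -> norm2_le N f (2 * B1 + 2 * B2).
Proof.
  intros H1 H2; apply norm2_le_ext with (vadd (sub f g) g).
  - intros; ceq.
  - apply norm2_le_add; auto.
Qed.

Lemma zpow_mul_add a b f : zpow_mul a (zpow_mul b f) = zpow_mul (a + b) f.
Proof. apply seqC_ext; intros; unfold zpow_mul; f_equal; lia. Qed.

Lemma zpow_mul_0 f : zpow_mul 0 f = f.
Proof. apply seqC_ext; intros; unfold zpow_mul; f_equal; lia. Qed.

Lemma zpow_mul_ind (Q : seqC -> Prop) :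
  (forall f, Q f -> Q (zpow_mul 1 f)) -> (forall f, Q f -> Q (zpow_mul (-1) f)) ->
  forall z f, Q f -> Q (zpow_mul z f).
Proof.
  intros H1 Hm1 z f Hf.
  assert (Hn : forall n : nat, Q (zpow_mul (Z.of_nat n) f) /\ Q (zpow_mul (- Z.of_nat n) f)).
  { induction n as [|n [IHp IHm]]; [simpl; rewrite zpow_mul_0; auto|].
    replace (Z.of_nat (S n)) with (1 + Z.of_nat n)%Z by lia.
    replace (- (1 + Z.of_nat n))%Z with (-1 + - Z.of_nat n)%Z by lia.
    rewrite <- !zpow_mul_add; auto. }
  destruct (Z_le_gt_dec 0 z).
  - replace z with (Z.of_nat (Z.to_nat z)) by lia; apply Hn.
  - replace z with (- Z.of_nat (Z.to_nat (- z)))%Z by lia; apply Hn.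
Qed.

Lemma norm2_le_zpow_mul N z f B : norm2_le N f B -> norm2_le N (zpow_mul z f) B.
Proof.
  intros H; apply (zpow_mul_ind (fun g => norm2_le N g B)); auto; intros g Hg M;
    eapply Rle_trans; [apply energy_zpow_one|apply Hg| |apply Hg]; apply energy_zpow_minus_one.
Qed.

Lemma in_H_add N f g : in_H N f -> in_H N g -> in_H N (vadd f g).
Proof.
  intros [Hf [B1 HB1]] [Hg [B2 HB2]]; split.
  - intros k j Hj; unfold vadd; rewrite Hf, Hg by auto; ceq.
  - exists (2 * B1 + 2 * B2); apply norm2_le_add; auto.
Qed.

Lemma in_H_scale N c f : in_H N f -> in_H N (vscale c f).
Proof.
  intros [Hf [B HB]]; split.
  - intros k j Hj; unfold vscale; rewrite Hf by auto; ceq.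
  - exists (Cnorm2 c * B); apply norm2_le_scale; auto.
Qed.

Lemma in_H_sub N f g : in_H N f -> in_H N g -> in_H N (sub f g).
Proof.
  intros [Hf [B1 HB1]] [Hg [B2 HB2]]; split.
  - intros k j Hj; unfold sub; rewrite Hf, Hg by auto; ceq.
  - exists (2 * B1 + 2 * B2); apply norm2_le_sub; auto.
Qed.

Lemma in_H_zpow_mul N z f : in_H N f -> in_H N (zpow_mul z f).
Proof.
  intros [Hf [B HB]]; split.
  - intros k j Hj; apply Hf; auto.
  - exists B; apply norm2_le_zpow_mul; auto.
Qed.

Lemma in_H_zero N : in_H N vzero.
Proof. split; [reflexivity|exists 0; apply norm2_le_zero; lra]. Qed.

Definition head (L : nat) (f : seqC) : seqC :=
  fun k j => if (Z.abs k <=? Z.of_nat L)%Z then f k j else C0.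
Definition tail (L : nat) (f : seqC) : seqC :=
  fun k j => if (Z.abs k <=? Z.of_nat L)%Z then C0 else f k j.

Lemma head_add_tail L f k j : f k j = Cadd (head L f k j) (tail L f k j).
Proof. unfold head, tail; destruct (Z.abs k <=? Z.of_nat L)%Z; ceq. Qed.

Lemma norm2_le_head N L f B : norm2_le N f B -> norm2_le N (head L f) B.
Proof.
  intros H; replace B with (1 * B + 0 * B) by ring.
  apply norm2_le_dominated with f f; auto; try lra.
  intros k j _; unfold head; destruct (Z.abs k <=? Z.of_nat L)%Z; [lra|].
  pose proof (Cnorm2_ge0 (f k j)); unfold Cnorm2, C0 in *; simpl; lra.
Qed.

Lemma shell_tail N L f m : shell N (tail L f) m = if (m <=? L)%nat then 0 else shell N f m.
Proof.
  assert (Hc : forall k, coef_energy N (tail L f) k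
                         = if (Z.abs k <=? Z.of_nat L)%Z then 0 else coef_energy N f k).
  { intros k; unfold coef_energy, tail; destruct (Z.abs k <=? Z.of_nat L)%Z; [|reflexivity].
    rewrite (sum_eq _ (fun _ => 0)), sum_cte; [ring|].
    intros; unfold Cnorm2, C0; simpl; ring. }
  destruct m as [|m]; cbn [shell]; rewrite ?Hc.
  - replace (Z.abs 0 <=? Z.of_nat L)%Z with true by (symmetry; apply Z.leb_le; lia); auto.
  - replace (Z.abs (- Z.of_nat (S m))) with (Z.of_nat (S m)) by lia.
    replace (Z.abs (Z.of_nat (S m))) with (Z.of_nat (S m)) by lia.
    destruct (Nat.leb_spec (S m) L); destruct (Z.leb_spec (Z.of_nat (S m)) (Z.of_nat L));
      try lia; lra.
Qed.

Lemma energy_tail N L f M :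
  energy N (tail L f) M = if (M <=? L)%nat then 0 else energy N f M - energy N f L.
Proof.
  rewrite !energy_shells; induction M as [|M IH].
  - change (shell N (tail L f) 0 = 0); rewrite shell_tail; reflexivity.
  - rewrite !tech5, IH, shell_tail.
    destruct (Nat.leb_spec (S M) L); destruct (Nat.leb_spec M L); try lia; try lra.
    replace L with M by lia; lra.
Qed.

(* The energies increase to a finite supremum, so a tail window carries little energy. *)
Lemma norm2_tail_small N f B : norm2_le N f B -> forall d, 0 < d -> exists L, norm2_le N (tail L f) d.
Proof.
  intros HB d Hd.
  destruct (completeness (fun x => exists M, x = energy N f M)) as [s [Hub Hlub]].
  { exists B; intros x [M ->]; apply HB. }
  { exists (energy N f 0); eauto. }
  assert (exists L, s - d < energy N f L) as [L HL].
  { apply NNPP; intros Hn; assert (s <= s - d); [|lra].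
    apply Hlub; intros x [M ->]; apply Rnot_lt_le; intros Hc; apply Hn; eauto. }
  exists L; intros M; rewrite energy_tail.
  destruct (Nat.leb_spec M L); [lra|].
  assert (energy N f M <= s) by (apply Hub; eauto); lra.
Qed.

Definition unit_vector (j0 : nat) : seqC :=
  fun k j => if ((k =? 0)%Z && (j =? j0)%nat)%bool then (1, 0) else C0.

Definition pair_eqb (x y : Z * nat) : bool := ((fst x =? fst y)%Z && (snd x =? snd y)%nat)%bool.

Definition restrict (l : list (Z * nat)) (f : seqC) : seqC :=
  fun k j => if existsb (pair_eqb (k, j)) l then f k j else C0.

Lemma existsb_pair_eqb x l : existsb (pair_eqb x) l = true <-> In x l.
Proof.
  rewrite existsb_exists; split.
  - intros [y [Hy Hxy]]; destruct x, y; unfold pair_eqb in Hxy; simpl in Hxy.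
    apply Bool.andb_true_iff in Hxy as [H1 H2]; apply Z.eqb_eq in H1; apply Nat.eqb_eq in H2.
    subst; auto.
  - intros Hx; exists x; split; auto; unfold pair_eqb; rewrite Z.eqb_refl, Nat.eqb_refl; auto.
Qed.

Definition frequency_window (L N : nat) : list (Z * nat) :=
  list_prod (map (fun i => (Z.of_nat i - Z.of_nat L)%Z) (seq 0 (2 * L + 1))) (seq 0 (S N)).

Lemma in_frequency_window L N k j :
  In (k, j) (frequency_window L N) <-> (Z.abs k <= Z.of_nat L)%Z /\ (j <= N)%nat.
Proof.
  unfold frequency_window; rewrite in_prod_iff, in_map_iff, in_seq; split.
  - intros [[i [Hi Hs]] Hj]; apply in_seq in Hs; lia.
  - intros [Hk Hj]; split; [|lia].
    exists (Z.to_nat (k + Z.of_nat L)); split; [lia|apply in_seq; lia].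
Qed.

Lemma restrict_frequency_window N L f : in_H N f -> restrict (frequency_window L N) f = head L f.
Proof.
  intros [Hf _]; apply seqC_ext; intros k j; unfold restrict, head.
  destruct (existsb _ _) eqn:Hin.
  - apply existsb_pair_eqb, in_frequency_window in Hin as [Hk _].
    replace (Z.abs k <=? Z.of_nat L)%Z with true by (symmetry; apply Z.leb_le; auto); auto.
  - destruct (Z.leb_spec (Z.abs k) (Z.of_nat L)); auto.
    destruct (le_lt_dec j N) as [Hj|Hj]; [|symmetry; apply Hf; auto].
    assert (Hw : In (k, j) (frequency_window L N)) by (apply in_frequency_window; auto).
    apply existsb_pair_eqb in Hw; congruence.
Qed.

Lemma restrict_cons k0 j0 l f : existsb (pair_eqb (k0, j0)) l = false ->
  restrict ((k0, j0) :: l) f = vadd (restrict l f) (vscale (f k0 j0) (zpow_mul k0 (unit_vector j0))).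
Proof.
  intros Hnew; apply seqC_ext; intros k j; unfold restrict, vadd, vscale, zpow_mul, unit_vector.
  simpl existsb; unfold pair_eqb at 1; simpl fst; simpl snd.
  destruct (Z.eqb_spec k k0) as [->|Hk]; destruct (Nat.eqb_spec j j0) as [->|Hj]; simpl.
  - rewrite Z.sub_diag, Hnew; simpl; ceq.
  - replace (j =? j0)%nat with false by (symmetry; apply Nat.eqb_neq; auto).
    rewrite Bool.andb_false_r; destruct (existsb _ l); ceq.
  - replace (k - k0 =? 0)%Z with false by (symmetry; apply Z.eqb_neq; lia).
    destruct (existsb _ l); ceq.
  - replace (k - k0 =? 0)%Z with false by (symmetry; apply Z.eqb_neq; lia).
    destruct (existsb _ l); ceq.
Qed.

(** * Completeness and the Baire category theorem *)

Lemma Un_cv_const a : Un_cv (fun _ => a) a.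
Proof. intros e He; exists 0%nat; intros; unfold Rdist; rewrite Rminus_diag, Rabs_R0; lra. Qed.

Lemma Un_cv_le (u : nat -> R) l n0 B : Un_cv u l -> (forall m, (n0 <= m)%nat -> u m <= B) -> l <= B.
Proof.
  intros Hu Hb; apply Rnot_lt_le; intros Hlt.
  destruct (Hu (l - B)) as [n1 Hn1]; [lra|].
  specialize (Hn1 (max n1 n0) ltac:(lia)); specialize (Hb (max n1 n0) ltac:(lia)).
  unfold Rdist in Hn1; apply Rabs_def2 in Hn1; lra.
Qed.

Lemma Un_cv_sum_f_R0 (u : nat -> nat -> R) (l : nat -> R) n :
  (forall i, Un_cv (fun m => u m i) (l i)) -> Un_cv (fun m => sum_f_R0 (u m) n) (sum_f_R0 l n).
Proof. intros H; induction n; simpl; [apply H|apply CV_plus; auto]. Qed.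

Definition coef_cv (c : nat -> seqC) (x : seqC) : Prop :=
  forall k j, Un_cv (fun n => fst (c n k j)) (fst (x k j)) /\ Un_cv (fun n => snd (c n k j)) (snd (x k j)).

Lemma energy_coef_cv N c x M : coef_cv c x -> Un_cv (fun n => energy N (c n) M) (energy N x M).
Proof.
  intros H; unfold energy; apply Un_cv_sum_f_R0; intros i; apply Un_cv_sum_f_R0; intros j.
  destruct (H (Z.of_nat i - Z.of_nat M)%Z j); unfold Cnorm2; apply CV_plus; apply CV_mult; auto.
Qed.

Lemma coef_cv_sub c x y : coef_cv c x -> coef_cv (fun n => sub (c n) y) (sub x y).
Proof.
  intros H k j; destruct (H k j); unfold sub, Cadd, Copp; simpl.
  split; apply CV_plus; auto; apply Un_cv_const.
Qed.

Lemma quarter_decay_small (r : nat -> R) :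
  (forall n, 0 < r n) -> (forall n, r (S n) <= r n / 4) -> forall e, 0 < e -> exists n, r n < e.
Proof.
  intros Hr Hdec e He.
  assert (Hgeo : forall n, r n <= r 0%nat * (/ 2) ^ n).
  { induction n; simpl; [lra|]; specialize (Hdec n); specialize (Hr n); nra. }
  destruct (pow_lt_1_zero (/ 2) ltac:(rewrite Rabs_pos_eq; lra) (e / r 0%nat)) as [n Hn].
  { apply Rdiv_lt_0_compat; auto. }
  exists n; specialize (Hn n (le_n _)); rewrite Rabs_pos_eq in Hn by (apply pow_le; lra).
  specialize (Hgeo n); specialize (Hr 0%nat).
  apply Rmult_lt_compat_l with (r := r 0%nat) in Hn; auto.
  replace (r 0%nat * (e / r 0%nat)) with e in Hn by (field; lra); lra.
Qed.

Lemma cauchy_of_sq_close (u : nat -> R) :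
  (forall e, 0 < e -> exists n0, forall n, (n0 <= n)%nat -> (u n - u n0) * (u n - u n0) < e * e / 4) ->
  Cauchy_crit u.
Proof.
  intros H e He; destruct (H e He) as [n0 Hn0]; exists n0; intros n m Hn Hm.
  specialize (Hn0 n Hn) as H1; specialize (Hn0 m Hm) as H2.
  assert (Rabs (u n - u n0) < e / 2) by (apply Rabs_def1; apply Rnot_le_lt; intro; nra).
  assert (Rabs (u m - u n0) < e / 2) by (apply Rabs_def1; apply Rnot_le_lt; intro; nra).
  unfold Rdist; apply Rabs_def1; apply Rabs_def2 in H0; apply Rabs_def2 in H3; lra.
Qed.

Section FastCauchy.

Variables (N : nat) (c : nat -> seqC) (r : nat -> R).
Hypothesis c_in_H : forall n, in_H N (c n).
Hypothesis r_gt0 : forall n, 0 < r n.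
Hypothesis r_decay : forall n, r (S n) <= r n / 4.
Hypothesis c_step : forall n, norm2_le N (sub (c (S n)) (c n)) (r n).

Lemma fast_cauchy_tail d n : norm2_le N (sub (c (n + d)%nat) (c n)) (4 * r n).
Proof.
  revert n; induction d as [|d IH]; intros n.
  - rewrite Nat.add_0_r; apply norm2_le_mono with 0; [apply norm2_le_sub_diag|specialize (r_gt0 n); lra].
  - replace (n + S d)%nat with (S n + d)%nat by lia.
    eapply norm2_le_mono; [apply norm2_le_sub_trans with (c (S n)); [apply IH|apply c_step]|].
    specialize (r_decay n); lra.
Qed.

Lemma fast_cauchy_coef_cauchy k j :
  Cauchy_crit (fun n => fst (c n k j)) /\ Cauchy_crit (fun n => snd (c n k j)).
Proof.
  destruct (le_lt_dec j N) as [Hj|Hj].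
  - assert (Hclose : forall e, 0 < e -> exists n0, forall n, (n0 <= n)%nat ->
                       Cnorm2 (Cadd (c n k j) (Copp (c n0 k j))) < e * e / 4).
    { intros e He; destruct (quarter_decay_small r r_gt0 r_decay (e * e / 16)) as [n0 Hn0]; [nra|].
      exists n0; intros n Hn.
      pose proof (fast_cauchy_tail (n - n0) n0 (Z.abs_nat k)) as Ht.
      replace (n0 + (n - n0))%nat with n in Ht by lia.
      pose proof (Cnorm2_le_energy N (sub (c n) (c n0)) k j Hj); unfold sub in *; lra. }
    split; apply cauchy_of_sq_close; intros e He; destruct (Hclose e He) as [n0 Hn0];
      exists n0; intros n Hn; specialize (Hn0 n Hn); unfold Cnorm2, Cadd, Copp in Hn0; simpl in Hn0;
      pose proof (Rle_0_sqr (fst (c n k j) + - fst (c n0 k j)));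
      pose proof (Rle_0_sqr (snd (c n k j) + - snd (c n0 k j))); unfold Rsqr in *; nra.
  - assert (Hz : forall n, c n k j = C0) by (intros n; apply (proj1 (c_in_H n)); auto).
    split; intros e He; exists 0%nat; intros n m _ _; rewrite !Hz; unfold Rdist, C0; simpl;
      rewrite Rminus_diag, Rabs_R0; lra.
Qed.

Lemma fast_cauchy_limit : exists x, in_H N x /\ forall n, norm2_le N (sub x (c n)) (4 * r n).
Proof.
  pose (x := fun k j => (proj1_sig (R_complete _ (proj1 (fast_cauchy_coef_cauchy k j))),
                         proj1_sig (R_complete _ (proj2 (fast_cauchy_coef_cauchy k j))))).
  assert (Hx : coef_cv c x) by (intros k j; unfold x; simpl; split; apply proj2_sig).
  assert (Hbound : forall n, norm2_le N (sub x (c n)) (4 * r n)).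
  { intros n M; apply Un_cv_le with (fun m => energy N (sub (c m) (c n)) M) n.
    - apply energy_coef_cv, coef_cv_sub, Hx.
    - intros m Hm; replace m with (n + (m - n))%nat by lia; apply fast_cauchy_tail. }
  exists x; split; auto; split.
  - intros k j Hj.
    assert (Hz : forall n, c n k j = C0) by (intros n; apply (proj1 (c_in_H n)); auto).
    destruct (Hx k j) as [H1 H2]; unfold C0; apply injective_projections; cbn [fst snd];
      [eapply UL_sequence; [exact H1|]|eapply UL_sequence; [exact H2|]];
      intros e He; exists 0%nat; intros n _; rewrite Hz; unfold Rdist, C0; simpl;
      rewrite Rminus_diag, Rabs_R0; lra.
  - destruct (c_in_H 0%nat) as [_ [B HB]].
    exists (2 * (4 * r 0%nat) + 2 * B); apply norm2_le_of_sub with (c 0%nat); auto.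
Qed.

End FastCauchy.

Lemma baire_category N (F : nat -> seqC -> Prop) :
  (forall x, in_H N x -> exists n, F n x) ->
  exists n c r, 0 < r /\ in_H N c /\ forall x, in_H N x -> norm2_le N (sub x c) r ->
    forall d, 0 < d -> exists y, F n y /\ norm2_le N (sub x y) d.
Proof.
  intros Hcover; apply NNPP; intros Hnone.
  assert (Hescape : forall (t : nat * seqC * R), exists q : seqC * R,
    let '(n, c, r) := t in 0 < r -> in_H N c ->
      in_H N (fst q) /\ norm2_le N (sub (fst q) c) r /\ 0 < snd q /\
      forall y, F n y -> ~ norm2_le N (sub (fst q) y) (snd q)).
  { intros [[n c] r]; destruct (classic (0 < r /\ in_H N c)) as [[Hr Hc]|Hn];
      [|exists (vzero, 1); intros; tauto].
    apply NNPP; intros Hq; apply Hnone; exists n, c, r; do 2 (split; auto).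
    intros x Hx Hxc d Hd; apply NNPP; intros Hfar; apply Hq; exists (x, d); simpl; intros _ _.
    do 3 (split; auto); intros y Hy Hxy; apply Hfar; eauto. }
  destruct (choice _ Hescape) as [esc Hesc].
  pose (balls := fix balls (n : nat) : seqC * R :=
    match n with
    | O => (vzero, 1)
    | S m => (fst (esc (m, fst (balls m), snd (balls m))),
              Rmin (snd (balls m)) (snd (esc (m, fst (balls m), snd (balls m)))) / 4)
    end).
  assert (Hballs : forall n, 0 < snd (balls n) /\ in_H N (fst (balls n))).
  { induction n as [|n [Hr Hc]]; [split; [simpl; lra|apply in_H_zero]|].
    destruct (Hesc (n, fst (balls n), snd (balls n)) Hr Hc) as [Hin [_ [Hd _]]].
    split; auto; simpl; unfold Rmin; destruct (Rle_dec _ _); lra. }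
  destruct (fast_cauchy_limit N (fun n => fst (balls n)) (fun n => snd (balls n)))
    as [x [Hx Hxb]].
  - intros n; apply Hballs.
  - intros n; apply Hballs.
  - intros n; simpl; pose proof (Rmin_l (snd (balls n)) (snd (esc (n, fst (balls n), snd (balls n))))); lra.
  - intros n; destruct (Hballs n) as [Hr Hc]; apply (Hesc (n, fst (balls n), snd (balls n)) Hr Hc).
  - destruct (Hcover x Hx) as [n Hn]; destruct (Hballs n) as [Hr Hc].
    destruct (Hesc (n, fst (balls n), snd (balls n)) Hr Hc) as [_ [_ [_ Hfar]]].
    apply (Hfar x Hn), norm2_le_sub_comm; eapply norm2_le_mono; [apply (Hxb (S n))|].
    simpl; pose proof (Rmin_r (snd (balls n)) (snd (esc (n, fst (balls n), snd (balls n))))); lra.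
Qed.

(** * The projection onto [Hplus] along [P] is bounded *)

Section Projection.

Variables (N : nat) (P : seqC -> Prop).
Hypothesis P_subspace : is_subspace N P.
Hypothesis P_closed : is_closed N P.
Hypothesis P_direct : direct_sum_H N P.

Lemma P_zero : P vzero.
Proof. apply P_subspace. Qed.

Lemma P_add f g : P f -> P g -> P (vadd f g).
Proof. apply P_subspace. Qed.

Lemma P_scale c f : P f -> P (vscale c f).
Proof. apply P_subspace. Qed.

Lemma P_sub f g : P f -> P g -> P (sub f g).
Proof.
  intros Hf Hg; replace (sub f g) with (vadd f (vscale (-1, 0) g)).
  - apply P_add, P_scale; auto.
  - apply seqC_ext; intros; ceq.
Qed.

Lemma Hplus_sub f g : Hplus N f -> Hplus N g -> Hplus N (sub f g).
Proof.
  intros [Hf Hf'] [Hg Hg']; split; [apply in_H_sub; auto|].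
  intros k j Hk; unfold sub; rewrite Hf', Hg' by auto; ceq.
Qed.

Lemma decomposition_exists f : exists ph : seqC * seqC,
  in_H N f -> P (fst ph) /\ Hplus N (snd ph) /\ forall k j, f k j = Cadd (fst ph k j) (snd ph k j).
Proof.
  destruct (classic (in_H N f)) as [Hf|Hf]; [|exists (vzero, vzero); tauto].
  destruct (proj2 P_direct f Hf) as [p [h Hph]]; exists (p, h); auto.
Qed.

Definition decomposition (f : seqC) : seqC * seqC :=
  proj1_sig (constructive_indefinite_description _ (decomposition_exists f)).
Definition proj_P (f : seqC) : seqC := fst (decomposition f).
Definition proj_plus (f : seqC) : seqC := snd (decomposition f).

Lemma decomposition_spec f : in_H N f ->
  P (proj_P f) /\ Hplus N (proj_plus f) /\ forall k j, f k j = Cadd (proj_P f k j) (proj_plus f k j).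
Proof. apply (proj2_sig (constructive_indefinite_description _ (decomposition_exists f))). Qed.

Lemma in_H_proj_plus f : in_H N f -> in_H N (proj_plus f).
Proof. intros Hf; apply (decomposition_spec f Hf). Qed.

Lemma proj_plus_unique f p h : in_H N f -> P p -> Hplus N h ->
  (forall k j, f k j = Cadd (p k j) (h k j)) -> proj_plus f = h.
Proof.
  intros Hf Hp Hh Hfph; destruct (decomposition_spec f Hf) as [Hp' [Hh' Hf']].
  assert (Hswap : sub (proj_plus f) h = sub p (proj_P f)).
  { apply seqC_ext; intros k j; specialize (Hfph k j); rewrite Hf' in Hfph.
    unfold sub, Cadd, Copp in *; injection Hfph; intros; apply injective_projections; simpl; lra. }
  apply seqC_ext; intros k j.
  assert (H0 : sub (proj_plus f) h k j = C0).
  { apply (proj1 P_direct); [rewrite Hswap; apply P_sub|apply Hplus_sub]; auto. }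
  unfold sub, Cadd, Copp, C0 in H0; injection H0; intros.
  apply injective_projections; lra.
Qed.

Lemma proj_plus_sub f g : in_H N f -> in_H N g -> proj_plus (sub f g) = sub (proj_plus f) (proj_plus g).
Proof.
  intros Hf Hg; destruct (decomposition_spec f Hf) as [Pf [Hf' Ef]].
  destruct (decomposition_spec g Hg) as [Pg [Hg' Eg]].
  apply proj_plus_unique with (sub (proj_P f) (proj_P g));
    [apply in_H_sub|apply P_sub|apply Hplus_sub|]; auto.
  intros k j; unfold sub; rewrite Ef, Eg; ceq.
Qed.

Lemma proj_plus_scale c f : in_H N f -> proj_plus (vscale c f) = vscale c (proj_plus f).
Proof.
  intros Hf; destruct (decomposition_spec f Hf) as [Pf [[Hf1 Hf2] Ef]].
  apply proj_plus_unique with (vscale c (proj_P f)); [apply in_H_scale|apply P_scale| |]; auto.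
  - split; [apply in_H_scale; auto|]; intros k j Hk; unfold vscale; rewrite Hf2 by auto; ceq.
  - intros k j; unfold vscale; rewrite Ef; ceq.
Qed.

Lemma proj_plus_zero : proj_plus vzero = vzero.
Proof.
  apply proj_plus_unique with vzero; [apply in_H_zero|apply P_zero| |intros; ceq].
  split; [apply in_H_zero|reflexivity].
Qed.

(* Closedness of [P] and of [Hplus] make the graph of [proj_plus] closed. *)
Lemma proj_plus_closed_graph x (s : nat -> seqC) g :
  in_H N x -> (forall K, in_H N (s K)) -> in_H N g ->
  (forall e, 0 < e -> exists K, norm2_le N (sub x (s K)) e /\ norm2_le N (sub g (proj_plus (s K))) e) ->
  proj_plus x = g.
Proof.
  intros Hx Hs Hg Hlim.
  assert (Hgplus : Hplus N g).
  { split; auto; intros k j Hk; destruct (le_lt_dec j N) as [Hj|Hj]; [|apply Hg; auto].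
    apply Cnorm2_small_eq0; intros e He; destruct (Hlim e He) as [K [_ HK]].
    destruct (decomposition_spec (s K) (Hs K)) as [_ [[_ Hneg] _]].
    pose proof (Cnorm2_le_energy N (sub g (proj_plus (s K))) k j Hj) as Hle.
    specialize (HK (Z.abs_nat k)).
    change (sub g (proj_plus (s K)) k j) with (Cadd (g k j) (Copp (proj_plus (s K) k j))) in Hle.
    rewrite Hneg in Hle by auto.
    replace (Cadd (g k j) (Copp C0)) with (g k j) in Hle by ceq; lra. }
  assert (HP : P (sub x g)).
  { apply P_closed; [apply in_H_sub; auto|]; intros e He.
    destruct (Hlim (e * e / 4)) as [K [H1 H2]]; [nra|].
    destruct (decomposition_spec (s K) (Hs K)) as [Hp [_ Hsk]].
    exists (proj_P (s K)); split; auto; unfold dist_le.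
    replace (e * e) with (2 * (e * e / 4) + 2 * (e * e / 4)) by field.
    apply norm2_le_ext with (sub (sub x (s K)) (sub g (proj_plus (s K)))); [|apply norm2_le_sub; auto].
    intros k j; unfold sub at 1 2 5; rewrite (Hsk k j); ceq. }
  apply proj_plus_unique with (sub x g); auto; intros; ceq.
Qed.

Lemma proj_plus_dense_bounded :
  exists r B, 0 < r /\ 0 < B /\ forall x, in_H N x -> norm2_le N x r ->
    forall d, 0 < d -> exists y, in_H N y /\ norm2_le N (proj_plus y) B /\ norm2_le N (sub x y) d.
Proof.
  destruct (baire_category N (fun n x => in_H N x /\ norm2_le N (proj_plus x) (INR n)))
    as [n [c [r [Hr [Hc Hdense]]]]].
  { intros x Hx; destruct (in_H_proj_plus x Hx) as [_ [B HB]].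
    destruct (INR_archimed 1 B) as [n Hn]; [lra|].
    exists n; split; auto; eapply norm2_le_mono; [exact HB|lra]. }
  exists r, (4 * INR n + 1); split; auto; split; [pose proof (pos_INR n); lra|].
  intros x Hx Hxr d Hd.
  destruct (Hdense (vadd x c) (in_H_add N x c Hx Hc)) with (d / 4) as [y1 [[Hy1 Hpy1] Hxy1]];
    [|lra|].
  { apply norm2_le_ext with x; auto; intros; ceq. }
  destruct (Hdense c Hc) with (d / 4) as [y2 [[Hy2 Hpy2] Hcy2]]; [|lra|].
  { eapply norm2_le_mono; [apply norm2_le_sub_diag|lra]. }
  exists (sub y1 y2); split; [apply in_H_sub; auto|split].
  - rewrite proj_plus_sub by auto; eapply norm2_le_mono; [apply norm2_le_sub; eauto|lra].
  - replace d with (2 * (d / 4) + 2 * (d / 4)) by field.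
    apply norm2_le_ext with (sub (sub (vadd x c) y1) (sub c y2)); [intros; ceq|].
    apply norm2_le_sub; auto.
Qed.

Definition proj_plus_nearly_bounded (r B : R) : Prop :=
  forall s, 0 < s -> forall x, in_H N x -> norm2_le N x (s * s * r) ->
    forall d, 0 < d -> exists y, in_H N y /\ norm2_le N (proj_plus y) (s * s * B) /\ norm2_le N (sub x y) d.

Lemma proj_plus_nearly_bounded_exists : exists r B, 0 < r /\ 0 < B /\ proj_plus_nearly_bounded r B.
Proof.
  destruct proj_plus_dense_bounded as [r [B [Hr [HB Happrox]]]].
  exists r, B; do 2 (split; auto); intros s Hs x Hx Hxr d Hd.
  destruct (Happrox (vscale (/ s, 0) x)) with (d / (s * s)) as [y [Hy [Hpy Hxy]]].
  - apply in_H_scale; auto.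
  - replace r with (Cnorm2 (/ s, 0) * (s * s * r)); [apply norm2_le_scale; auto|].
    unfold Cnorm2; simpl; field; lra.
  - apply Rdiv_lt_0_compat; nra.
  - exists (vscale (s, 0) y); split; [apply in_H_scale; auto|split].
    + rewrite proj_plus_scale by auto.
      replace (s * s * B) with (Cnorm2 (s, 0) * B) by (unfold Cnorm2; simpl; ring).
      apply norm2_le_scale; auto.
    + replace d with (Cnorm2 (s, 0) * (d / (s * s))) by (unfold Cnorm2; simpl; field; lra).
      apply norm2_le_ext with (vscale (s, 0) (sub (vscale (/ s, 0) x) y)); [|apply norm2_le_scale; auto].
      intros k j; unfold vscale, sub, Cmul, Cadd, Copp; apply injective_projections; simpl; field; lra.
Qed.

(* Approximating successive remainders at scales [(1/2)^i] writes [x] as the fast series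
   [x = sum_i (x_i - x_(i+1))]. *)
Lemma proj_plus_successive_approx r B x : 0 < r -> proj_plus_nearly_bounded r B ->
  in_H N x -> norm2_le N x r ->
  exists xs : nat -> seqC, xs 0%nat = x /\ forall i, in_H N (xs i) /\ norm2_le N (xs i) ((/ 4) ^ i * r) /\
    norm2_le N (proj_plus (sub (xs i) (xs (S i)))) ((/ 4) ^ i * B).
Proof.
  intros Hr Happrox Hx Hxr.
  assert (Hstep : forall iz : nat * seqC, exists y,
    in_H N (snd iz) -> norm2_le N (snd iz) ((/ 4) ^ fst iz * r) ->
    in_H N y /\ norm2_le N (proj_plus y) ((/ 4) ^ fst iz * B) /\
    norm2_le N (sub (snd iz) y) ((/ 4) ^ S (fst iz) * r)).
  { intros [i z]; simpl fst; simpl snd.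
    destruct (classic (in_H N z /\ norm2_le N z ((/ 4) ^ i * r))) as [[Hz Hzr]|Hn];
      [|exists vzero; tauto].
    assert (Hsq : (/ 2) ^ i * (/ 2) ^ i = (/ 4) ^ i) by (rewrite <- Rpow_mult_distr; f_equal; field).
    destruct (Happrox ((/ 2) ^ i) (pow_lt (/ 2) i ltac:(lra)) z Hz) with ((/ 4) ^ S i * r)
      as [y Hy]; [rewrite Hsq; auto|apply Rmult_lt_0_compat; [apply pow_lt, Rinv_0_lt_compat|]; lra|].
    exists y; rewrite <- Hsq; auto. }
  destruct (choice _ Hstep) as [st Hst].
  pose (xs := fix xs (i : nat) : seqC :=
    match i with O => x | S i => sub (xs i) (st (i, xs i)) end).
  assert (Hxs : forall i, in_H N (xs i) /\ norm2_le N (xs i) ((/ 4) ^ i * r)).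
  { induction i as [|i [Hi Hir]]; [simpl; rewrite Rmult_1_l; auto|].
    destruct (Hst (i, xs i) Hi Hir) as [Hy [_ Hxy]]; split; [apply in_H_sub|]; auto. }
  exists xs; split; [reflexivity|]; intros i; destruct (Hxs i) as [Hi Hir]; do 2 (split; auto).
  replace (sub (xs i) (xs (S i))) with (st (i, xs i)); [apply (Hst (i, xs i) Hi Hir)|].
  apply seqC_ext; intros; simpl; ceq.
Qed.

Lemma proj_plus_bounded : exists a K, 0 < a /\
  forall x, in_H N x -> norm2_le N x a -> norm2_le N (proj_plus x) K.
Proof.
  destruct proj_plus_nearly_bounded_exists as [r [B [Hr [HB Happrox]]]].
  exists r, (2 * (4 * B) + 2 * 0); split; auto; intros x Hx Hxr.
  destruct (proj_plus_successive_approx r B x Hr Happrox Hx Hxr) as [xs [Hxs0 Hxs]].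
  assert (Hq : forall i, 0 < (/ 4) ^ i) by (intros; apply pow_lt; lra).
  assert (HqS : forall i, (/ 4) ^ S i = (/ 4) ^ i / 4) by (intros; simpl; field).
  assert (Hrem : forall K, in_H N (sub x (xs K))) by (intros; apply in_H_sub, Hxs; auto).
  destruct (fast_cauchy_limit N (fun K => proj_plus (sub x (xs K))) (fun K => (/ 4) ^ K * B))
    as [g [Hg Hgt]].
  - intros K; apply in_H_proj_plus, Hrem.
  - intros K; apply Rmult_lt_0_compat; auto.
  - intros K; rewrite HqS; lra.
  - intros K; rewrite <- proj_plus_sub by auto.
    replace (sub (sub x (xs (S K))) (sub x (xs K))) with (sub (xs K) (xs (S K)));
      [apply Hxs|apply seqC_ext; intros; ceq].
  - assert (Hpx : proj_plus x = g).
    { apply proj_plus_closed_graph with (fun K => sub x (xs K)); auto; intros e He.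
      destruct (quarter_decay_small (fun K => (/ 4) ^ K * (4 * B + r))) with e as [K HK]; auto.
      { intros; apply Rmult_lt_0_compat; auto; lra. }
      { intros; rewrite HqS; lra. }
      pose proof (Hq K); exists K; split.
      - apply norm2_le_ext with (xs K); [intros; ceq|].
        eapply norm2_le_mono; [apply Hxs|nra].
      - eapply norm2_le_mono; [apply Hgt|nra]. }
    rewrite Hpx; apply norm2_le_of_sub with (proj_plus (sub x (xs 0%nat))).
    + replace (4 * B) with (4 * ((/ 4) ^ 0 * B)) by (simpl; ring); apply Hgt.
    + rewrite Hxs0; replace (sub x x) with vzero by (apply seqC_ext; intros; ceq).
      rewrite proj_plus_zero; apply norm2_le_zero; lra.
Qed.

(** * Density of the shifts of [P] *)

Hypothesis P_zinv : forall f, P f -> P (zpow_mul (-1) f).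

Lemma P_zpow_mul_neg n f : P f -> P (zpow_mul (- Z.of_nat n) f).
Proof.
  intros Hf; induction n as [|n IH]; [simpl; rewrite zpow_mul_0; auto|].
  replace (- Z.of_nat (S n))%Z with (-1 + - Z.of_nat n)%Z by lia; rewrite <- zpow_mul_add; auto.
Qed.

Definition in_shift_closure (g : seqC) : Prop :=
  forall eps, 0 < eps -> exists (n : nat) p, P p /\ norm2_le N (sub g (zpow_mul (Z.of_nat n) p)) eps.

Lemma shift_closure_zero : in_shift_closure vzero.
Proof.
  intros e He; exists 0%nat, vzero; split; [apply P_zero|].
  apply norm2_le_ext with vzero; [intros; ceq|apply norm2_le_zero; lra].
Qed.

Lemma shift_closure_add f g : in_shift_closure f -> in_shift_closure g -> in_shift_closure (vadd f g).
Proof.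
  intros Hf Hg e He.
  destruct (Hf (e / 4)) as [n1 [p1 [Hp1 H1]]]; [lra|].
  destruct (Hg (e / 4)) as [n2 [p2 [Hp2 H2]]]; [lra|].
  exists (n1 + n2)%nat, (vadd (zpow_mul (- Z.of_nat n2) p1) (zpow_mul (- Z.of_nat n1) p2)).
  split; [apply P_add; apply P_zpow_mul_neg; auto|].
  replace e with (2 * (e / 4) + 2 * (e / 4)) by field.
  apply norm2_le_ext with (vadd (sub f (zpow_mul (Z.of_nat n1) p1)) (sub g (zpow_mul (Z.of_nat n2) p2)));
    [|apply norm2_le_add; auto].
  intros k j; unfold vadd, sub, zpow_mul.
  replace (k - Z.of_nat (n1 + n2) - - Z.of_nat n2)%Z with (k - Z.of_nat n1)%Z by lia.
  replace (k - Z.of_nat (n1 + n2) - - Z.of_nat n1)%Z with (k - Z.of_nat n2)%Z by lia.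
  ceq.
Qed.

Lemma shift_closure_scale c f : in_shift_closure f -> in_shift_closure (vscale c f).
Proof.
  intros Hf e He; pose proof (Cnorm2_ge0 c).
  destruct (Hf (e / (Cnorm2 c + 1))) as [n [p [Hp Hfp]]]; [apply Rdiv_lt_0_compat; lra|].
  exists n, (vscale c p); split; [apply P_scale; auto|].
  apply norm2_le_ext with (vscale c (sub f (zpow_mul (Z.of_nat n) p))); [intros; ceq|].
  eapply norm2_le_mono; [apply norm2_le_scale; eauto|].
  replace e with ((Cnorm2 c + 1) * (e / (Cnorm2 c + 1))) at 2 by (field; lra).
  apply Rmult_le_compat_r; [apply Rlt_le, Rdiv_lt_0_compat|]; lra.
Qed.

Lemma shift_closure_zpow_mul z f : in_shift_closure f -> in_shift_closure (zpow_mul z f).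
Proof.
  apply zpow_mul_ind; clear z f; intros f Hf e He; destruct (Hf e He) as [n [p [Hp Hfp]]].
  - exists (S n), p; split; auto.
    apply norm2_le_ext with (zpow_mul 1 (sub f (zpow_mul (Z.of_nat n) p)));
      [|apply norm2_le_zpow_mul; auto].
    intros k j; unfold sub, zpow_mul; do 3 f_equal; lia.
  - exists n, (zpow_mul (-1) p); split; auto.
    apply norm2_le_ext with (zpow_mul (-1) (sub f (zpow_mul (Z.of_nat n) p)));
      [|apply norm2_le_zpow_mul; auto].
    intros k j; unfold sub, zpow_mul; do 3 f_equal; lia.
Qed.

Lemma shifted_decomposition e m : in_H N e ->
  P (proj_P (zpow_mul (- Z.of_nat m) e)) /\
  (forall k j, (k < Z.of_nat m)%Z ->
     zpow_mul (Z.of_nat m) (proj_plus (zpow_mul (- Z.of_nat m) e)) k j = C0) /\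
  forall k j, e k j = Cadd (zpow_mul (Z.of_nat m) (proj_P (zpow_mul (- Z.of_nat m) e)) k j)
                           (zpow_mul (Z.of_nat m) (proj_plus (zpow_mul (- Z.of_nat m) e)) k j).
Proof.
  intros He; destruct (decomposition_spec (zpow_mul (- Z.of_nat m) e) (in_H_zpow_mul N _ e He))
    as [Hp [[_ Hneg] Hdec]].
  split; [|split]; auto.
  - intros k j Hk; apply Hneg; lia.
  - intros k j; unfold zpow_mul at 1 2; rewrite <- Hdec; unfold zpow_mul; f_equal; lia.
Qed.

Section Averaging.

Variables (a K0 : R) (e : seqC).
Hypothesis proj_plus_bound : forall x, in_H N x -> norm2_le N x a -> norm2_le N (proj_plus x) K0.
Hypothesis e_in_H : in_H N e.
Hypothesis e_small : norm2_le N e a.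

(* [K e = A + T + z^n p] with [A] of finite support: the next summand [e = z^m p' + b] is taken
   with [m] beyond the support of [A]; as [b] lives on frequencies [>= m], the head of [b] is
   orthogonal to [A] and the energy of [A] grows only linearly in [K], while tails go into [T]. *)
Lemma averaged_decomposition (K : nat) tau : 0 < tau ->
  exists A T (L n : nat) p, P p /\ norm2_le N A (INR K * K0) /\ norm2_le N T tau /\
    (forall k j, (Z.of_nat L < Z.abs k)%Z -> A k j = C0) /\
    forall k j, Cadd (Cadd (A k j) (T k j)) (zpow_mul (Z.of_nat n) p k j) = Cmul (INR K, 0) (e k j).
Proof.
  revert tau; induction K as [|K IH]; intros tau Htau.
  { exists vzero, vzero, 0%nat, 0%nat, vzero; split; [apply P_zero|].
    split; [simpl; rewrite Rmult_0_l; apply norm2_le_zero; lra|].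
    split; [apply norm2_le_zero; lra|]; split; [reflexivity|intros; simpl; ceq]. }
  destruct (IH (tau / 4)) as [A [T [L [n [p [Hp [HA [HT [HAsupp HAeq]]]]]]]]]; [lra|].
  set (m := S L); set (b := zpow_mul (Z.of_nat m) (proj_plus (zpow_mul (- Z.of_nat m) e))).
  destruct (shifted_decomposition e m e_in_H) as [Hp' [Hb0 Heb]]; fold b in Hb0, Heb.
  assert (Hb : norm2_le N b K0).
  { apply norm2_le_zpow_mul, proj_plus_bound; [apply in_H_zpow_mul|apply norm2_le_zpow_mul]; auto. }
  destruct (norm2_tail_small N b K0 Hb (tau / 4)) as [L' HL']; [lra|].
  exists (vadd A (head L' b)), (vadd T (tail L' b)), (max L L'), (n + m)%nat,
    (vadd (zpow_mul (- Z.of_nat m) p) (zpow_mul (- Z.of_nat n) (proj_P (zpow_mul (- Z.of_nat m) e)))).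
  split; [apply P_add; apply P_zpow_mul_neg; auto|].
  split.
  { replace (INR (S K) * K0) with (1 * (INR K * K0) + 1 * K0) by (rewrite S_INR; ring).
    apply norm2_le_dominated with A (head L' b); try lra; auto; [|apply norm2_le_head; auto].
    intros k j _; rewrite !Rmult_1_l; apply Cnorm2_Cadd_disjoint.
    destruct (Z_lt_le_dec (Z.of_nat L) (Z.abs k)); [left; auto|right].
    unfold head; destruct (Z.abs k <=? Z.of_nat L')%Z; auto; apply Hb0; unfold m; lia. }
  split; [replace tau with (2 * (tau / 4) + 2 * (tau / 4)) by field; apply norm2_le_add; auto|].
  split.
  { intros k j Hk; unfold vadd, head; rewrite HAsupp by lia.
    replace (Z.abs k <=? Z.of_nat L')%Z with false by (symmetry; apply Z.leb_gt; lia); ceq. }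
  intros k j; specialize (HAeq k j); specialize (Heb k j).
  rewrite (head_add_tail L' b k j) in Heb; unfold vadd, zpow_mul in *.
  replace (k - Z.of_nat (n + m) - - Z.of_nat m)%Z with (k - Z.of_nat n)%Z by lia.
  replace (k - Z.of_nat (n + m) - - Z.of_nat n)%Z with (k - Z.of_nat m)%Z by lia.
  rewrite S_INR, Heb; rewrite Heb in HAeq; revert HAeq.
  unfold Cadd, Cmul; intros HAeq; injection HAeq; intros.
  apply injective_projections; simpl; lra.
Qed.

Lemma shift_closure_small : in_shift_closure e.
Proof.
  intros eps Heps.
  assert (HK0 : 0 <= K0).
  { apply norm2_le_ge0 with N (proj_plus e); apply proj_plus_bound; auto. }
  destruct (INR_archimed eps (4 * K0 + eps)) as [K HK]; [lra|].
  assert (HK1 : 1 <= INR K) by nra.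
  destruct (averaged_decomposition K (eps / 4)) as [A [T [L [n [p [Hp [HA [HT [_ HAeq]]]]]]]]]; [lra|].
  exists n, (vscale (/ INR K, 0) p); split; [apply P_scale; auto|].
  apply norm2_le_ext with (vscale (/ INR K, 0) (vadd A T)).
  { intros k j; specialize (HAeq k j); unfold vscale, vadd, sub, zpow_mul in *; revert HAeq.
    unfold Cadd, Cmul, Copp; intros HAeq; injection HAeq; intros.
    apply injective_projections; simpl; apply Rmult_eq_reg_l with (INR K); try lra;
      field_simplify; try lra; nra. }
  eapply norm2_le_mono; [apply norm2_le_scale, norm2_le_add; eauto|].
  unfold Cnorm2; simpl; set (X := INR K) in *.
  assert (Hsplit : (/ X * / X + 0 * 0) * (2 * (X * K0) + 2 * (eps / 4)) = 2 * K0 / X + eps / (2 * X * X))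
    by (field; lra).
  rewrite Hsplit.
  assert (2 * K0 / X <= eps / 2).
  { apply Rmult_le_reg_r with X; [lra|]; replace (2 * K0 / X * X) with (2 * K0) by (field; lra); nra. }
  assert (eps / (2 * X * X) <= eps / 2).
  { unfold Rdiv; apply Rmult_le_compat_l; [lra|]; apply Rinv_le_contravar; nra. }
  lra.
Qed.

End Averaging.


Lemma norm2_le_unit_vector j0 : norm2_le N (unit_vector j0) (INR (S N)).
Proof.
  assert (Hcoef : forall k, coef_energy N (unit_vector j0) k
                           = if (k =? 0)%Z then coef_energy N (unit_vector j0) 0 else 0).
  { intros k; destruct (Z.eqb_spec k 0) as [->|Hk]; [reflexivity|].
    unfold coef_energy; rewrite (sum_eq _ (fun _ => 0)), sum_cte; [ring|].
    intros j _; unfold unit_vector; replace (k =? 0)%Z with false by (symmetry; apply Z.eqb_neq; auto).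
    unfold Cnorm2, C0; simpl; ring. }
  intros M; rewrite energy_shells; induction M as [|M IH].
  - change (coef_energy N (unit_vector j0) 0 <= INR (S N)); unfold coef_energy.
    rewrite <- (Rmult_1_l (INR (S N))), <- sum_cte; apply sum_Rle; intros j _.
    unfold unit_vector; destruct (_ && _)%bool; unfold Cnorm2, C0; simpl; lra.
  - rewrite tech5; cbn [shell]; rewrite !(Hcoef (_ (Z.of_nat (S M)))), (Hcoef (Z.of_nat (S M))).
    replace (- Z.of_nat (S M) =? 0)%Z with false by (symmetry; apply Z.eqb_neq; lia).
    replace (Z.of_nat (S M) =? 0)%Z with false by (symmetry; apply Z.eqb_neq; lia); lra.
Qed.

Lemma in_H_unit_vector j0 : (j0 <= N)%nat -> in_H N (unit_vector j0).
Proof.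
  intros Hj0; split; [|exists (INR (S N)); apply norm2_le_unit_vector].
  intros k j Hj; unfold unit_vector.
  replace (j =? j0)%nat with false by (symmetry; apply Nat.eqb_neq; lia).
  rewrite Bool.andb_false_r; reflexivity.
Qed.

Lemma shift_closure_unit_vector j0 : (j0 <= N)%nat -> in_shift_closure (unit_vector j0).
Proof.
  intros Hj0; destruct proj_plus_bounded as [a [K0 [Ha Hbound]]].
  assert (HN : 0 < INR (S N)) by (apply lt_0_INR; lia).
  set (s := Rmin 1 (a / INR (S N))).
  assert (Hs0 : 0 < s) by (apply Rmin_glb_lt; [lra|apply Rdiv_lt_0_compat; lra]).
  assert (Hsa : s * s * INR (S N) <= a).
  { assert (s <= 1) by apply Rmin_l; assert (Hsa : s <= a / INR (S N)) by apply Rmin_r.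
    apply Rle_trans with (s * INR (S N)); [apply Rmult_le_compat_r; nra|].
    apply Rmult_le_compat_r with (r := INR (S N)) in Hsa; [|lra].
    replace (a / INR (S N) * INR (S N)) with a in Hsa by (field; lra); lra. }
  replace (unit_vector j0) with (vscale (/ s, 0) (vscale (s, 0) (unit_vector j0)))
    by (apply seqC_ext; intros k j; unfold vscale, Cmul;
        apply injective_projections; simpl; field; lra).
  apply shift_closure_scale, shift_closure_small with a K0; auto.
  - apply in_H_scale, in_H_unit_vector; auto.
  - eapply norm2_le_mono; [apply norm2_le_scale, norm2_le_unit_vector|].
    unfold Cnorm2; simpl; rewrite Rmult_0_l, Rplus_0_r; exact Hsa.
Qed.

Lemma shift_closure_restrict l f : (forall x, In x l -> (snd x <= N)%nat) -> in_shift_closure (restrict l f).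
Proof.
  induction l as [|[k0 j0] l IH]; intros Hl.
  - replace (restrict nil f) with vzero by (apply seqC_ext; reflexivity); apply shift_closure_zero.
  - assert (Hrest : in_shift_closure (restrict l f)) by (apply IH; intros; apply Hl; simpl; auto).
    destruct (existsb (pair_eqb (k0, j0)) l) eqn:Hin.
    + replace (restrict ((k0, j0) :: l) f) with (restrict l f); auto.
      apply seqC_ext; intros k j; unfold restrict; simpl existsb.
      destruct (pair_eqb (k, j) (k0, j0)) eqn:Hkj; simpl; auto.
      unfold pair_eqb in Hkj; simpl in Hkj; apply Bool.andb_true_iff in Hkj as [Hk Hj].
      apply Z.eqb_eq in Hk; apply Nat.eqb_eq in Hj; subst; rewrite Hin; reflexivity.
    + rewrite restrict_cons by auto.
      apply shift_closure_add, shift_closure_scale, shift_closure_zpow_mul; auto.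
      apply shift_closure_unit_vector, (Hl (k0, j0)); simpl; auto.
Qed.

End Projection.

Theorem lemmaA1 (N : nat) (P : seqC -> Prop) :
  is_subspace N P ->
  is_closed N P ->
  (forall f, P f -> P (zpow_mul (-1) f)) ->
  direct_sum_H N P ->
  dense_in_H N (fun g => exists (n : nat) (p : seqC), P p /\ g = zpow_mul (Z.of_nat n) p).
Proof.
  intros Hsub Hclosed Hzinv Hdirect f Hf eps Heps.
  destruct (proj2 Hf) as [B HB].
  destruct (norm2_tail_small N f B HB (eps * eps / 4)) as [L HL]; [nra|].
  assert (Hhead : in_shift_closure N P (head L f)).
  { rewrite <- (restrict_frequency_window N L f Hf).
    apply shift_closure_restrict; auto.
    intros [k j] Hkj; apply in_frequency_window in Hkj; simpl; tauto. }
  destruct (Hhead (eps * eps / 4)) as [n [p [Hp Hnp]]]; [nra|].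
  exists (zpow_mul (Z.of_nat n) p); split; [eauto|unfold dist_le].
  replace (eps * eps) with (2 * (eps * eps / 4) + 2 * (eps * eps / 4)) by field.
  apply norm2_le_sub_trans with (head L f); auto.
  apply norm2_le_ext with (tail L f); auto.
  intros k j; unfold sub; rewrite (head_add_tail L f k j); ceq.
Qed.
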